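(* Let $\mathcal{A}$ be a separating union-closed family with base set $[n]$ and height $h$, and suppose $h = 4 \leq n$ and $0 \leq |\mathcal{B}(\mathcal{A})| \leq 2$. Then \[\mathrm{Avg}(\mathcal{A})=\frac{\sum_{A \in \mathcal{A}}|A|}{|\mathcal{A}|} \geq \frac{n}{2}.\]
   Context: A family of sets $\mathcal{A}$ is union-closed if it is a finite family of distinct finite sets with at least one nonempty member set, and $X,Y\in\mathcal{A}$ implies $X\cup Y\in\mathcal{A}$ (the empty set may be a member). For a family $\mathcal{F}$, $b(\mathcal{F})=\bigcup_{F\in\mathcal{F}}F$; the base set $b(\mathcal{A})$ is denoted $[n]=\{1,\dots,n\}$. $\mathcal{A}$ is separating if for any two distinct $x,y\in[n]$ there is $A\in\mathcal{A}$ containing exactly one of $x,y$. A chain in $\mathcal{A}$ is a subfamily any two distinct members of which are comparable under proper inclusion; the height $h$ of $\mathcal{A}$ is the maximum size of a chain in $\mathcal{A}$. For real $x\ge 0$, $\mathcal{A}_{<x}=\{A\in\mathcal{A} : |A|<x\}$. For $\mathcal{S}\subseteq\mathcal{A}$ and $S\in\mathcal{S}$, $\mathrm{irr}_{\mathcal{S}}(S)=\{s\in S : s\notin b(\mathcal{S}\setminus\{S\})\}$, and $\mathcal{S}$ is irredundant if $\mathrm{irr}_{\mathcal{S}}(S)\neq\emptyset$ for every $S\in\mathcal{S}$. Set $B=b(\mathcal{A}_{<n/2})$, and let $\mathcal{B}=\mathcal{B}(\mathcal{A})$ denote any irredundant subfamily of $\mathcal{A}_{<n/2}$ of minimum size such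 that $b(\mathcal{B})=B$ (so $|\mathcal{B}|$ is well defined). $\mathrm{Avg}(\mathcal{A})$ denotes the average size of a member set of $\mathcal{A}$. *)

From mathcomp Require Import all_boot all_order all_algebra.
Set Implicit Arguments. Unset Strict Implicit. Unset Printing Implicit Defensive.

Section Defs.
Variable n : nat.
Notation fam := {set {set 'I_n}}.

Definition bU (F : fam) : {set 'I_n} := \bigcup_(X in F) X.

Definition union_closed (F : fam) : Prop :=
  (exists2 X, X \in F & X != set0) /\
  (forall X Y, X \in F -> Y \in F -> X :|: Y \in F).

Definition separating (F : fam) : Prop :=
  forall x y : 'I_n, x != y -> exists2 A, A \in F & (x \in A) != (y \in A).

Definition is_chain (C : fam) : bool :=
  [forall X in C, forall Y in C, (X != Y) ==> ((X \proper Y) || (Y \proper X))].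

Definition height (F : fam) : nat :=
  \max_(C in powerset F | is_chain C) #|C|.

Definition small_part (F : fam) : fam := [set A in F | (#|A|).*2 < n].

Definition irr (S : fam) (X : {set 'I_n}) : {set 'I_n} := X :\: bU (S :\ X).

Definition irredundant (S : fam) : bool := [forall X in S, irr S X != set0].

Definition B_candidate (F S : fam) : bool :=
  [&& S \subset small_part F, irredundant S & bU S == bU (small_part F)].

(* S is a valid choice of B(A): a candidate of minimum size *)
Definition is_B (F S : fam) : bool :=
  B_candidate F S && [forall S' : fam, B_candidate F S' ==> (#|S| <= #|S'|)].

Definition Avg (F : fam) : rat := (\sum_(A in F) #|A|)%:R / (#|F|)%:R.

End Defs.

From mathcomp Require Import all_boot all_order all_algebra.
From mathcomp Require Import zify ring.
Import Order.TTheory GRing.Theory Num.Theory.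

Set Implicit Arguments.
Unset Strict Implicit.
Unset Printing Implicit Defensive.

(* Write excess A := 2|A| - n; the average size is at least n/2 iff the
   excesses of the members of F sum to a nonnegative number.  Let B be the union
   of the members of size < n/2.  It is the union of at most two of them, so it
   lies in F and differs from [n], and every member not contained in B has
   nonnegative excess.  Counting [n] (excess n), it suffices to bound the
   members below B together with those strictly between B and [n].  Height 4
   keeps the chains through B short:
   - if no member lies strictly inside B, B alone has excess >= -n;
   - if members lie inside B but no 2-chain does, the members strictly inside B
     pairwise unite to B and those strictly between B and [n] pairwise unite to
     [n]; hence their complements are disjoint, and separation bounds n - |B|
     by one plus the number of the latter;
   - if a 2-chain lies inside B, nothing lies strictly between B and [n], so
     separation forces |B| = n - 1: n = 2s + 1 and B is the disjoint union of
     two halves X1, X2 of size s.  The members strictly between a half and B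
     pairwise unite to B, and a member A containing neither half is determined
     by the pair (A u X1, A u X2) of such members; bounding the products of
     their defects |B \ _| gives total excess >= -n below B. *)

Lemma sum_card_disjoint_le (I T : finType) (P : {pred I}) (f : I -> {set T})
    (Z : {set T}) :
  {in P, forall X, f X \subset Z} ->
  {in P &, forall X Y, X != Y -> [disjoint f X & f Y]} ->
  \sum_(X in P) #|f X| <= #|Z|.
Proof.
move=> fZ fdisj.
have cardE X : X \in P -> #|f X| = \sum_(z in Z) (z \in f X).
  move=> PX; rewrite -big_mkcondr sum1dep_card.
  by apply: eq_card => z; rewrite inE andb_idl // => /(subsetP (fZ X PX)).
rewrite (eq_bigr _ cardE) exchange_big -sum1_card leq_sum // => z _.
rewrite -big_mkcondr sum1dep_card; apply/card_le1_eqP => X Y.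
rewrite !inE => /andP[PX zX] /andP[PY zY]; apply/eqP/contraT => neqYX.
by have /disjointFr/(_ zY) := fdisj Y X PY PX neqYX; rewrite zX.
Qed.

Lemma sum_card_setD_le (T : finType) (P : {set {set T}}) (C Z : {set T}) :
  {in P, forall X : {set T}, C :\: X \subset Z} ->
  {in P &, forall X Y, X != Y -> X :|: Y = C} ->
  \sum_(X in P) #|C :\: X| <= #|Z|.
Proof.
move=> sub_Z cover; apply: sum_card_disjoint_le => // X Y PX PY neqXY.
by rewrite -setI_eq0 -setDUr cover ?setDv.
Qed.

Lemma leq_sum_subset (I : finType) (P Q : {set I}) (f : I -> nat) :
  P \subset Q -> \sum_(i in P) f i <= \sum_(i in Q) f i.
Proof. by move=> sPQ; rewrite [leqRHS](big_setID P) (setIidPr sPQ) leq_addr. Qed.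

Lemma ler_sum_subset (I : finType) (R : numDomainType) (P Q : {set I})
    (f : I -> R) :
  P \subset Q -> {in Q :\: P, forall i, (0 <= f i)%R} ->
  (\sum_(i in P) f i <= \sum_(i in Q) f i)%R.
Proof.
move=> sPQ f_ge0; rewrite [leRHS](big_setID P) (setIidPr sPQ) lerDl.
exact: sumr_ge0.
Qed.

Section UnionClosed.
Variables (T : finType) (F : {set {set T}}).
Hypothesis closedF : forall X Y, X \in F -> Y \in F -> X :|: Y \in F.

Lemma bigcup_mem_closed (S : {set {set T}}) :
  S \subset F -> S != set0 -> \bigcup_(X in S) X \in F.
Proof.
move=> sSF /set0Pn[X0 SX0].
suff : X0 :|: \bigcup_(X in S) X \in F by rewrite (setUidPr (bigcup_sup X0 SX0)).
apply: (big_ind (fun Y => X0 :|: Y \in F)).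
- by rewrite setU0 (subsetP sSF).
- by move=> Y1 Y2 FY1 FY2; rewrite -(setUid X0) setUACA closedF.
- by move=> X SX; rewrite closedF // (subsetP sSF).
Qed.

Lemma setU_eq_of_no_chain (P : {set {set T}}) (C : {set T}) :
  P \subset F -> {in P, forall X : {set T}, X \subset C} ->
  (forall X Y, X \in P -> Y \in F -> X \proper Y -> ~~ (Y \proper C)) ->
  {in P &, forall X Y, X != Y -> X :|: Y = C}.
Proof.
move=> sPF sub_C no_chain X Y PX PY neqXY.
have sXYC : X :|: Y \subset C by rewrite subUset !sub_C.
apply/eqP; rewrite eqEsubset sXYC /=; apply: contraT => nCXY.
have pXYC : X :|: Y \proper C.
  by rewrite properEneq sXYC andbT; apply: contraNneq nCXY => ->.
have [FX FY] := (subsetP sPF X PX, subsetP sPF Y PY).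
have [sYX | nsYX] := boolP (Y \subset X).
  have pYX : Y \proper X by rewrite properEneq sYX eq_sym neqXY.
  by move: (no_chain Y X PY FX pYX); rewrite -{1}(setUidPl sYX) pXYC.
have pX : X \proper X :|: Y.
  by rewrite properEneq subsetUl andbT; apply: contraNneq nsYX => ->; rewrite subsetUr.
by move: (no_chain X _ PX (closedF FX FY) pX); rewrite pXYC.
Qed.

End UnionClosed.

Lemma bigcup_eq_setU2 (T : finType) (S P : {set {set T}}) :
  S \subset P -> #|S| <= 2 -> P != set0 ->
  \bigcup_(X in S) X = \bigcup_(X in P) X ->
  exists X1 X2, [/\ X1 \in P, X2 \in P & \bigcup_(X in P) X = X1 :|: X2].
Proof.
move=> sSP cardS /set0Pn[Z PZ] eqU; rewrite -eqU.
move: cardS eqU sSP; rewrite leq_eqVlt ltnS leq_eqVlt ltnS leqn0.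
case/or3P => [/cards2P[X [Y [neqXY ->]]] | /cards1P[X ->] | /eqP/cards0_eq ->] eqU sSP.
- exists X, Y; rewrite (@big_setU1 _ _ _ _ X [set Y] id) ?big_set1 ?inE //.
  by split=> //; apply: (subsetP sSP); rewrite !inE eqxx ?orbT.
- exists X, X; rewrite big_set1 setUid.
  by split=> //; apply: (subsetP sSP); rewrite inE.
- exists Z, Z; rewrite big_set0 setUid; split=> //.
  apply/esym/eqP; rewrite -subset0.
  by move: eqU; rewrite big_set0 => ->; apply: bigcup_sup.
Qed.

Section Height.
Variables (n : nat) (F : {set {set 'I_n}}).

Lemma sorted_proper_size_le_height (s : seq {set 'I_n}) :
  sorted (fun X Y : {set 'I_n} => X \proper Y) s -> {subset s <= F} ->
  size s <= height F.
Proof.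
move=> sorted_s sF.
have tr : transitive (fun X Y : {set 'I_n} => X \proper Y).
  by move=> Y X Z; apply: proper_trans.
have chain_s : is_chain [set X in s].
  apply/forall_inP => X; rewrite inE => sX; apply/forall_inP => Y; rewrite inE => sY.
  apply/implyP => neqXY; case: (ltngtP (index X s) (index Y s)) => [lt|gt|eq].
  - by rewrite (sorted_ltn_index tr sorted_s _ _ sX sY lt).
  - by rewrite (sorted_ltn_index tr sorted_s _ _ sY sX gt) orbT.
  - by move: neqXY; rewrite -(nth_index X sX) eq nth_index ?eqxx.
rewrite -(card_uniqP (sorted_uniq tr (@properxx _) sorted_s)) -cardsE /height.
apply: (leq_bigmax_cond (F := fun C : {set {set 'I_n}} => #|C|)).
by rewrite powersetE chain_s andbT; apply/subsetP => X; rewrite inE => /sF.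
Qed.

Lemma no_proper_chain5 X1 X2 X3 X4 X5 : height F <= 4 ->
  X1 \in F -> X2 \in F -> X3 \in F -> X4 \in F -> X5 \in F ->
  X1 \proper X2 -> X2 \proper X3 -> X3 \proper X4 -> X4 \proper X5 -> False.
Proof.
move=> hF F1 F2 F3 F4 F5 p12 p23 p34 p45.
have sF : {subset [:: X1; X2; X3; X4; X5] <= F}.
  by apply/allP; rewrite /= F1 F2 F3 F4 F5.
have := sorted_proper_size_le_height _ sF.
by rewrite /= p12 p23 p34 p45 => /(_ isT)/leq_trans/(_ hF).
Qed.
End Height.

Section Excess.
Variable n : nat.

Definition excess (A : {set 'I_n}) : int := ((2 * #|A|)%:Z - n%:Z)%R.

Lemma excess_setT : excess setT = (n%:Z)%R.
Proof. by rewrite /excess cardsT card_ord; lia. Qed.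

Lemma excess_sub (A C : {set 'I_n}) :
  A \subset C -> excess A = (excess C - 2 * #|C :\: A|%:Z)%R.
Proof. by move=> sAC; rewrite /excess -(cardsID A C) (setIidPr sAC); lia. Qed.

Lemma sum_excess (P : {set {set 'I_n}}) :
  (\sum_(A in P) excess A = (2 * \sum_(A in P) #|A|)%:Z - (#|P| * n)%:Z)%R.
Proof.
rewrite sumrB sumr_const -(big_morph _ PoszD (erefl (Posz 0))) -big_distrr /=.
lia.
Qed.

Lemma Avg_ge_half (F : {set {set 'I_n}}) :
  F != set0 -> (0 <= \sum_(A in F) excess A)%R -> ((n%:R / 2%:R : rat) <= Avg F)%R.
Proof.
rewrite -card_gt0 sum_excess subr_ge0 lez_nat => F_gt0 le_nF.
rewrite /Avg ler_pdivrMr ?ltr0n // mulrAC ler_pdivlMr ?ltr0n //.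
by rewrite -!natrM ler_nat mulnC [(_ * 2)%N]mulnC.
Qed.

Lemma sum_excess_sub (P : {set {set 'I_n}}) (C : {set 'I_n}) :
  {in P, forall A : {set 'I_n}, A \subset C} ->
  (\sum_(A in P) excess A = excess C *+ #|P| - 2 * (\sum_(A in P) #|C :\: A|)%:Z)%R.
Proof.
move=> sub_C; rewrite (eq_bigr _ (fun A PA => excess_sub (sub_C A PA))).
by rewrite sumrB sumr_const -mulr_sumr -(big_morph _ PoszD (erefl (Posz 0))) -mulr_natl natz.
Qed.

End Excess.

Lemma no_chain_excess_arith (n b r d t g : nat) :
  4 <= n -> b < n -> 0 < r -> r <= d -> d <= b -> g + b <= n -> n <= b + t + 1 ->
  (0 <= (2 * b%:Z - n%:Z) * (r%:Z + 1) - 2 * d%:Z + n%:Z + n%:Z * t%:Z - 2 * g%:Z)%R.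
Proof.
move=> n_ge4 lt_bn r_gt0 le_rd le_db le_gbn le_nbt.
have : (n%:Z * (n%:Z - b%:Z - 1) <= n%:Z * t%:Z)%R by apply: ler_wpM2l; lia.
case: (leqP n (2 * b)) => [le_n2b | lt_2bn].
  have : (0 <= (2 * b%:Z - n%:Z) * (r%:Z - 1))%R by apply: mulr_ge0; lia.
  nia.
have : (0 <= (n%:Z - 2 * b%:Z) * (b%:Z - r%:Z))%R by apply: mulr_ge0; lia.
nia.
Qed.

(* This is (2s - 1 - 2 d1) (2s - 1 - 2 d2) >= 0, rearranged. *)
Lemma defect_pair_arith (s d1 d2 : nat) : d1 < s -> d2 < s ->
  ((2 * s%:Z - 1) * - (2 * s%:Z - 1 - 2 * (d1 + d2)%:Z) <= 4 * (d1 * d2)%:Z)%R.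
Proof. by move=> lt_d1s lt_d2s; nia. Qed.

Lemma one_side_arith (s t N D E : nat) :
  1 < s -> 0 < t -> N <= t -> D <= s -> E <= s ->
  (2 - 4 * s%:Z <= (2 * s%:Z - 1) *+ t - 2 * D%:Z + (- 1 *+ N - 2 * E%:Z))%R.
Proof.
move=> lt_1s t_gt0 le_Nt le_Ds le_Es.
have : (0 <= (2 * s%:Z - 2) * (t%:Z - 1))%R by apply: mulr_ge0; lia.
lia.
Qed.

Lemma halves_card_arith (n b c x y i : nat) :
  b + c = n -> c <= 1 -> b < n -> b + i = x + y -> x.*2 < n -> y.*2 < n ->
  [/\ b = 2 * x, n = 2 * x + 1 & y = x].
Proof. by rewrite -!mul2n => *; split; lia. Qed.

Lemma le_4s_of_mul_le (s : nat) (x : int) : 1 < s ->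
  ((2 * s%:Z - 1) * x <= 4 * (s * s)%:Z)%R -> (x <= 4 * s%:Z)%R.
Proof. by move=> lt_1s le_x; nia. Qed.

Section Core.
Variables (n : nat) (F : {set {set 'I_n}}) (B : {set 'I_n}).
Hypothesis closedF : forall X Y, X \in F -> Y \in F -> X :|: Y \in F.
Hypothesis setT_F : [set: 'I_n] \in F.
Hypothesis height_F : height F <= 4.
Hypothesis n_ge4 : 4 <= n.
Hypothesis B_F : B \in F.
Hypothesis B_proper : B \proper setT.
Hypothesis small_sub_B : forall A, A \in small_part F -> A \subset B.

Definition below := [set A in F | A \subset B].
Definition inner := [set A in F | A \proper B].
Definition above := [set A in F | B \proper A & A \proper setT].

Lemma excess_ge0_outside A : A \in F -> ~~ (A \subset B) -> (0 <= excess A)%R.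
Proof. by move=> FA /(contra (@small_sub_B A)); rewrite inE FA -leqNgt /excess; lia. Qed.

Lemma sum_above_excess_ge0 : (0 <= \sum_(A in above) excess A)%R.
Proof.
apply: sumr_ge0 => A; rewrite inE => /and3P[FA pBA _].
by apply: excess_ge0_outside; move: pBA; rewrite properE => /andP[].
Qed.

Lemma sum_excess_ge_split :
  (\sum_(A in below) excess A + n%:Z + \sum_(A in above) excess A
     <= \sum_(A in F) excess A)%R.
Proof.
have below_F : below \subset F by apply/subsetP => A; rewrite inE => /andP[].
have top_above : setT |: above \subset F :\: below.
  apply/subsetP => A; rewrite !inE => /predU1P[->|/and3P[FA pBA _]].
    by rewrite setT_F andbT; move: B_proper; rewrite properE => /andP[_ ->].
  by rewrite FA andbT; move: pBA; rewrite properE => /andP[_ ->].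
rewrite [leRHS](big_setID below) (setIidPr below_F) -addrA lerD2l.
apply: (le_trans _ (ler_sum_subset (f := @excess n) top_above _)).
  by rewrite big_setU1 ?excess_setT // inE; apply/negP => /and3P[_ _]; rewrite properxx.
move=> A /setDP[/setDP[FA]]; rewrite inE FA /= => nAB _.
exact: excess_ge0_outside.
Qed.

Lemma excess_ge0_of_below : (- n%:Z <= \sum_(A in below) excess A)%R ->
  (0 <= \sum_(A in below) excess A + n%:Z + \sum_(A in above) excess A)%R.
Proof. by move=> ge_n; rewrite addr_ge0 ?sum_above_excess_ge0 // -[Posz n]opprK subr_ge0. Qed.

Lemma inner0_below_excess_ge :
  inner = set0 -> (- n%:Z <= \sum_(A in below) excess A)%R.
Proof.
move=> inner0; have -> : below = [set B].
  apply/setP => A; rewrite !inE; apply/andP/eqP => [[FA sAB]|->]; last by rewrite B_F.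
  apply/eqP; rewrite eqEproper sAB; apply: contraT => /negbNE pAB.
  by have := in_set0 A; rewrite -inner0 inE FA pAB.
by rewrite big_set1 /excess; lia.
Qed.

(* A point outside B is missed by at most one member of [above]; separation
   makes this assignment injective. *)
Lemma card_setC_le_above : separating F ->
  {in above &, forall X Y, X != Y -> X :|: Y = setT} -> #|~: B| <= #|above| + 1.
Proof.
move=> sepF above_cover.
pose miss x := [pick M in above | x \notin M].
have miss_eq y M : M \in above -> y \notin M -> miss y = Some M.
  move=> aM yM; rewrite /miss; case: pickP => [M' /andP[aM' yM'] | /(_ M)]; last first.
    by rewrite aM yM.
  congr Some; apply/eqP/contraT => neqM.
  by move/setP/(_ y): (above_cover _ _ aM' aM neqM); rewrite !inE (negbTE yM) (negbTE yM').
have miss_neq x y A : x \notin B -> y \notin B -> A \in F -> x \in A -> y \notin A ->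
    miss x != miss y.
  move=> xB yB FA xA yA.
  have aAB : A :|: B \in above.
    rewrite inE closedF //=; apply/andP; split; apply/properP; split.
    - exact: subsetUr.
    - by exists x; rewrite ?inE ?xA.
    - exact: subsetT.
    - by exists y; rewrite !inE ?negb_or ?yA ?yB.
  rewrite (miss_eq y _ aAB); last by rewrite !inE negb_or yA yB.
  rewrite /miss; case: pickP => // M /andP[_ xM]; apply: contraNneq xM => -[->].
  by rewrite !inE xA.
have miss_inj : {in ~: B &, injective miss}.
  move=> x y; rewrite !inE => xB yB eq_miss; apply/eqP/contraT => /sepF[A FA].
  case xA: (x \in A); case yA: (y \in A) => //= _.
  - by move: (miss_neq x y A xB yB FA); rewrite xA yA eq_miss eqxx => /(_ isT isT).
  - by move: (miss_neq y x A yB xB FA); rewrite xA yA eq_miss eqxx => /(_ isT isT).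
rewrite -(card_in_imset miss_inj).
have miss_sub : miss @: (~: B) \subset None |: Some @: above.
  apply/subsetP => _ /imsetP[x _ ->]; rewrite /miss.
  by case: pickP => [M /andP[aM _]|_]; rewrite !inE ?imset_f.
apply: leq_trans (subset_leq_card miss_sub) _.
by rewrite cardsU1 (card_imset _ (@Some_inj _)) addnC leq_add2l leq_b1.
Qed.

Section NoChainBelow.
Variable A0 : {set 'I_n}.
Hypothesis inner_A0 : A0 \in inner.
Hypothesis no_chain : forall X Y, X \in F -> Y \in F -> X \proper Y -> ~~ (Y \proper B).

Lemma inner_cover : {in inner &, forall X Y, X != Y -> X :|: Y = B}.
Proof.
apply: (setU_eq_of_no_chain closedF).
- by apply/subsetP => A; rewrite inE => /andP[].
- by move=> A; rewrite inE => /andP[_ /proper_sub].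
- by move=> X Y; rewrite inE => /andP[FX _]; apply: no_chain.
Qed.

Lemma above_cover : {in above &, forall X Y, X != Y -> X :|: Y = setT}.
Proof.
move: inner_A0; rewrite inE => /andP[FA0 pA0B].
apply: (setU_eq_of_no_chain closedF).
- by apply/subsetP => A; rewrite inE => /andP[].
- by move=> A _; apply: subsetT.
- move=> X Y; rewrite inE => /and3P[FX pBX _] FY pXY; apply/negP => pYT.
  exact: (no_proper_chain5 height_F FA0 B_F FX FY setT_F pA0B pBX pXY pYT).
Qed.

Lemma no_chain_excess_ge0 : separating F ->
  (0 <= \sum_(A in below) excess A + n%:Z + \sum_(A in above) excess A)%R.
Proof.
move=> sepF.
have below_eq : below = B |: inner.
  apply/setP => A; rewrite !inE properEneq.
  by case: eqP => [->|_]; rewrite ?B_F ?subxx ?andbT ?andbF.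
rewrite below_eq big_setU1 /=; last by rewrite inE properxx andbF.
rewrite (sum_excess_sub (C := B)); last by move=> A; rewrite inE => /andP[_ /proper_sub].
rewrite (sum_excess_sub (C := setT)) ?excess_setT; last by move=> A _; apply: subsetT.
set r := #|inner|; set d := \sum_(A in inner) _; set t := #|above|.
set g := \sum_(A in above) _.
have le_dB : d <= #|B|.
  by apply: sum_card_setD_le inner_cover => A _; apply: subsetDl.
have le_rd : r <= d.
  rewrite /r -sum1_card leq_sum // => A; rewrite inE => /andP[_ /properP[_ [x xB xA]]].
  by rewrite card_gt0; apply/set0Pn; exists x; rewrite inE xB xA.
have le_gB : g <= #|setT :\: B|.
  apply: sum_card_setD_le above_cover => A; rewrite inE => /and3P[_ /proper_sub sBA _].
  exact: setDS.
have r_gt0 : 0 < r by rewrite card_gt0; apply/set0Pn; exists A0.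
have le_Bt := card_setC_le_above sepF above_cover.
have cardBC : #|B| + #|~: B| = n by rewrite cardsC card_ord.
have lt_Bn : #|B| < n by have := proper_card B_proper; rewrite cardsT card_ord.
have le_gBn : g + #|B| <= n by rewrite setTD in le_gB; lia.
have le_nBt : n <= #|B| + t + 1 by lia.
have := no_chain_excess_arith n_ge4 lt_Bn r_gt0 le_rd le_dB le_gBn le_nBt.
rewrite /excess; lia.
Qed.

End NoChainBelow.

Lemma no_proper_chain3_below X1 X2 X3 : X1 \in F -> X2 \in F -> X3 \in F ->
  X1 \proper X2 -> X2 \proper X3 -> X3 \proper B -> False.
Proof.
move=> F1 F2 F3 p12 p23 p3B.
exact: (no_proper_chain5 height_F F1 F2 F3 B_F setT_F p12 p23 p3B B_proper).
Qed.

Section TwoChainBelow.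
Variable s : nat.
Hypothesis card_B : #|B| = 2 * s.
Hypothesis n_eq : n = 2 * s + 1.

Definition halves (X1 X2 : {set 'I_n}) :=
  [/\ X1 \in F, X2 \in F, X1 :|: X2 = B, #|X1| = s & #|X2| = s].
Definition between (X : {set 'I_n}) := [set Y in F | X \proper Y & Y \proper B].
Definition neither (X1 X2 : {set 'I_n}) :=
  [set A in F | A \subset B & ~~ (X1 \subset A) && ~~ (X2 \subset A)].

Lemma halvesC X1 X2 : halves X1 X2 -> halves X2 X1.
Proof. by case=> F1 F2 U c1 c2; split; rewrite // setUC. Qed.

Lemma neitherC X1 X2 : neither X1 X2 = neither X2 X1.
Proof. by apply/setP => A; rewrite !inE [~~ (X1 \subset A) && _]andbC. Qed.

Lemma excess_B : excess B = (2 * s%:Z - 1)%R.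
Proof. by rewrite /excess card_B n_eq; lia. Qed.

Section Halves.
Variables X1 X2 : {set 'I_n}.
Hypothesis halvesX : halves X1 X2.

Lemma halves_disjoint : X1 :&: X2 = set0.
Proof.
case: halvesX => _ _ U c1 c2; apply/eqP; rewrite -cards_eq0.
by have := cardsUI X1 X2; rewrite U card_B c1 c2; lia.
Qed.

Lemma excess_half : excess X1 = (- 1)%R.
Proof. by case: halvesX => _ _ _ c1 _; rewrite /excess c1 n_eq; lia. Qed.

Lemma between_cover : {in between X1 &, forall Y Z, Y != Z -> Y :|: Z = B}.
Proof.
case: halvesX => F1 _ _ _ _.
apply: (setU_eq_of_no_chain closedF).
- by apply/subsetP => Y; rewrite inE => /andP[].
- by move=> Y; rewrite inE => /and3P[_ _ /proper_sub].
- move=> Y Z; rewrite inE => /and3P[FY p1Y _] FZ pYZ; apply/negP => pZB.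
  exact: (no_proper_chain3_below F1 FY FZ p1Y pYZ pZB).
Qed.

Lemma between_defect_lt (Y : {set 'I_n}) : Y \in between X1 -> #|B :\: Y| < s.
Proof.
case: halvesX => _ _ _ c1 _; rewrite inE => /and3P[_ /proper_card p1Y /proper_sub sYB].
by rewrite cardsDS // card_B; move: p1Y; rewrite c1; lia.
Qed.

Lemma sum_between_defect : \sum_(Y in between X1) #|B :\: Y| <= s.
Proof.
case: halvesX => _ _ U _ c2; rewrite -c2.
apply: sum_card_setD_le between_cover => Y; rewrite inE => /and3P[_ /proper_sub s1Y _].
apply/subsetP => x; rewrite -U !inE => /andP[xY /orP[x1|//]].
by rewrite (subsetP s1Y x x1) in xY.
Qed.

Lemma excess_between (Y : {set 'I_n}) : Y \in between X1 ->
  excess Y = (2 * s%:Z - 1 - 2 * #|B :\: Y|%:Z)%R.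
Proof. by rewrite inE => /and3P[_ _ /proper_sub sYB]; rewrite (excess_sub sYB) excess_B. Qed.

Lemma excess_between_gt0 (Y : {set 'I_n}) : Y \in between X1 -> (0 < excess Y)%R.
Proof. by move=> bY; have := between_defect_lt bY; rewrite excess_between //; lia. Qed.

Lemma card_setD_halves (A : {set 'I_n}) :
  #|B :\: A| = #|B :\: (A :|: X1)| + #|B :\: (A :|: X2)|.
Proof.
case: halvesX => _ _ U _ _.
rewrite -cardsUI -setDIr -setUIr halves_disjoint setU0 -setDUr.
have -> : B :\: (A :|: X1 :|: (A :|: X2)) = set0.
  apply/eqP; rewrite setD_eq0 -U; apply/subsetP => x.
  by rewrite !inE => /orP[] ->; rewrite ?orbT.
by rewrite cards0 addn0.
Qed.

Lemma sub_halves (A : {set 'I_n}) :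
  A \subset B -> (X1 \subset A) && (X2 \subset A) = (A == B).
Proof.
case: halvesX => _ _ U _ _ sAB; rewrite -subUset U.
by apply/idP/eqP => [sBA | ->]; first by apply/eqP; rewrite eqEsubset sAB.
Qed.

Lemma half_neq_B : X1 != B.
Proof.
case: halvesX => _ _ _ c1 _; apply: contraTneq n_ge4 => eq1B.
by move: card_B; rewrite -eq1B c1 n_eq; lia.
Qed.

Lemma below_sup_half (A : {set 'I_n}) :
  [&& A \in below, X1 \subset A & ~~ (X2 \subset A)] = (A \in X1 |: between X1).
Proof.
case: halvesX => F1 _ U _ _.
rewrite !inE; have [->|neqA1] := eqVneq A X1.
  rewrite F1 -U subsetUl subxx /=; apply/negP => s21.
  by move: half_neq_B; rewrite -U (setUidPl s21) eqxx.
rewrite /= properEneq eq_sym neqA1 /= [A \proper B]properEneq.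
case sAB: (A \subset B); rewrite ?andbF //= andbT.
by rewrite andbT -(sub_halves sAB); case: (X1 \subset A).
Qed.

Lemma neither_union_cases (A : {set 'I_n}) :
  A \in neither X1 X2 -> A :|: X1 = X1 \/ A :|: X1 \in between X1.
Proof.
case: halvesX => F1 F2 U _ _; rewrite inE => /and3P[FA sAB /andP[n1A n2A]].
have [eqA1 | neqA1] := eqVneq (A :|: X1) X1; [by left | right].
have sUB : A :|: X1 \subset B by rewrite subUset sAB -U subsetUl.
rewrite inE closedF //= properEneq eq_sym neqA1 subsetUr properEneq sUB andbT /=.
rewrite -(sub_halves sUB) subsetUr andbT; apply: contra n2A => s2U.
rewrite -(setIidPl s2U) setIUr [X2 :&: X1]setIC halves_disjoint setU0.
exact: subsetIr.
Qed.

Lemma neither_union_between (A : {set 'I_n}) :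
  A \in neither X1 X2 -> between X1 != set0 -> A :|: X1 \in between X1.
Proof.
move=> nA /set0Pn[Y bY]; case: (neither_union_cases nA) => // eqA1.
case: halvesX => F1 _ _ _ _; move: nA; rewrite inE => /and3P[FA _ /andP[n1A _]].
have pA1 : A \proper X1.
  by rewrite properEneq -{2}eqA1 subsetUl andbT; apply: contraNneq n1A => ->.
move: bY; rewrite inE => /and3P[FY p1Y pYB].
by case: (no_proper_chain3_below FA F1 FY pA1 p1Y pYB).
Qed.

Lemma neither_sub_half (A : {set 'I_n}) :
  between X1 = set0 -> A \in neither X1 X2 -> A \subset X1.
Proof.
move=> b0 nA; case: (neither_union_cases nA) => [<-|]; first exact: subsetUl.
by rewrite b0 inE.
Qed.

Lemma card_setD_half : #|B :\: X1| = s.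
Proof.
case: halvesX => _ _ U c1 _; rewrite cardsDS; last by rewrite -U subsetUl.
by rewrite card_B c1 mul2n -addnn addnK.
Qed.

Lemma excess_below_halves (A : {set 'I_n}) : A \subset B ->
  excess A = (2 * s%:Z - 1 - 2 * (#|B :\: (A :|: X1)| + #|B :\: (A :|: X2)|)%:Z)%R.
Proof. by move=> sAB; rewrite (excess_sub sAB) excess_B card_setD_halves. Qed.

Lemma excess_sub_half (A : {set 'I_n}) : A \subset X1 ->
  excess A = (- 1 - 2 * #|B :\: (A :|: X2)|%:Z)%R.
Proof.
case: halvesX => _ _ U _ _ sA1.
have sAB : A \subset B by rewrite -U (subset_trans sA1) ?subsetUl.
by rewrite excess_below_halves // (setUidPr sA1) card_setD_half; lia.
Qed.

Lemma setU_halfK (A : {set 'I_n}) : A \subset X1 -> (A :|: X2) :&: X1 = A.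
Proof. by move=> sA1; rewrite setIUl (setIidPl sA1) setIC halves_disjoint setU0. Qed.

Lemma sum_between_excess_gt0 :
  between X1 != set0 -> (0 < \sum_(Y in between X1) excess Y)%R.
Proof.
case/set0Pn => Y bY; rewrite (big_setD1 Y bY) /=.
apply: lt_le_trans (excess_between_gt0 bY) _; rewrite lerDl.
by apply: sumr_ge0 => Z /setD1P[_ bZ]; apply/ltW/excess_between_gt0.
Qed.

End Halves.

Lemma sum_below_halves X1 X2 : halves X1 X2 ->
  (\sum_(A in below) excess A = excess B + excess X1 + excess X2
     + \sum_(Y in between X1) excess Y + \sum_(Y in between X2) excess Y
     + \sum_(A in neither X1 X2) excess A)%R.
Proof.
move=> hX; pose up (X : {set 'I_n}) := [set A : {set 'I_n} | X \subset A].
rewrite (big_setID (up X1)) (big_setID (up X2) (A := below :&: up X1)).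
rewrite (big_setID (up X2) (A := below :\: up X1)).
have -> : below :&: up X1 :&: up X2 = [set B].
  apply/setP => A; rewrite !inE -!andbA.
  have [sAB|nsAB] := boolP (A \subset B).
    by rewrite (sub_halves hX sAB); case: eqP => [->|]; rewrite ?B_F ?andbF.
  by rewrite andbF; apply/esym/negbTE; apply: contraNneq nsAB => ->.
have -> : below :&: up X1 :\: up X2 = X1 |: between X1.
  apply/setP => A; rewrite -(below_sup_half hX) !inE.
  by case: (A \in F) (A \subset B) (X1 \subset A) (X2 \subset A) => [] [] [] [].
have -> : (below :\: up X1) :&: up X2 = X2 |: between X2.
  apply/setP => A; rewrite -(below_sup_half (halvesC hX)) !inE.
  by case: (A \in F) (A \subset B) (X1 \subset A) (X2 \subset A) => [] [] [] [].
have -> : below :\: up X1 :\: up X2 = neither X1 X2.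
  apply/setP => A; rewrite !inE.
  by case: (A \in F) (A \subset B) (X1 \subset A) (X2 \subset A) => [] [] [] [].
rewrite big_set1 !big_setU1 ?inE ?properxx ?andbF //=.
ring.
Qed.

Lemma between0_excess_ge X1 X2 :
  halves X1 X2 -> between X1 = set0 -> between X2 = set0 ->
  (2 - 4 * s%:Z <= \sum_(A in neither X1 X2) excess A)%R.
Proof.
move=> hX b1_0 b2_0.
have : neither X1 X2 \subset [set set0].
  apply/subsetP => A nA; rewrite inE -subset0 -(halves_disjoint hX) subsetI.
  rewrite (neither_sub_half hX b1_0 nA) /=.
  by apply: (neither_sub_half (halvesC hX) b2_0); rewrite neitherC.
rewrite subset1 => /orP[] /eqP ->; rewrite ?big_set0 ?big_set1 /excess ?cards0; lia.
Qed.

Lemma one_between0_excess_ge X1 X2 :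
  halves X1 X2 -> between X1 = set0 -> between X2 != set0 ->
  (2 - 4 * s%:Z <= \sum_(Y in between X2) excess Y
                    + \sum_(A in neither X1 X2) excess A)%R.
Proof.
move=> hX b1_0 b2_n0.
have sub1 A : A \in neither X1 X2 -> A \subset X1 := neither_sub_half hX b1_0.
pose f A := A :|: X2.
have f_inj : {in neither X1 X2 &, injective f}.
  move=> A A' nA nA' eq_f.
  by rewrite -(setU_halfK hX (sub1 A nA)) -(setU_halfK hX (sub1 A' nA')) -/(f A) eq_f.
have f_sub : f @: neither X1 X2 \subset between X2.
  apply/subsetP => _ /imsetP[A nA ->].
  by apply: (neither_union_between (halvesC hX) _ b2_n0); rewrite neitherC.
have le_card : #|neither X1 X2| <= #|between X2|.
  by rewrite -(card_in_imset f_inj) subset_leq_card.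
have le_defect : \sum_(A in neither X1 X2) #|B :\: (A :|: X2)| <= s.
  rewrite -(big_imset (fun Y => #|B :\: Y|) f_inj) /=.
  exact: leq_trans (leq_sum_subset _ f_sub) (sum_between_defect (halvesC hX)).
rewrite (sum_excess_sub (C := B)) ?excess_B; last first.
  by move=> Y; rewrite inE => /and3P[_ _ /proper_sub].
rewrite (eq_bigr _ (fun A nA => excess_sub_half hX (sub1 A nA))).
rewrite sumrB sumr_const -mulr_sumr -(big_morph _ PoszD (erefl (Posz 0))).
apply: one_side_arith le_card (sum_between_defect (halvesC hX)) le_defect.
- by move: n_ge4; rewrite n_eq; lia.
- by rewrite card_gt0.
Qed.

Lemma sum_neither_defect_mul X1 X2 : halves X1 X2 ->
  between X1 != set0 -> between X2 != set0 ->
  \sum_(A in neither X1 X2) #|B :\: (A :|: X1)| * #|B :\: (A :|: X2)| <= s * s.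
Proof.
move=> hX b1_n0 b2_n0.
pose f A := (A :|: X1, A :|: X2).
have f_inj : {in neither X1 X2 &, injective f}.
  move=> A A' _ _ [eq1 eq2].
  by rewrite -[A]setU0 -[A']setU0 -(halves_disjoint hX) !setUIr eq1 eq2.
have f_sub : f @: neither X1 X2 \subset setX (between X1) (between X2).
  apply/subsetP => _ /imsetP[A nA ->]; rewrite in_setX.
  rewrite (neither_union_between hX nA b1_n0) /=.
  by apply: (neither_union_between (halvesC hX) _ b2_n0); rewrite neitherC.
pose d (Y : {set 'I_n}) := #|B :\: Y|.
rewrite -(big_imset (fun p => d p.1 * d p.2) f_inj) /=.
apply: leq_trans (leq_sum_subset _ f_sub) _.
rewrite (eq_bigl (fun p => (p.1 \in between X1) && (p.2 \in between X2))); last first.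
  by case=> ? ?; rewrite in_setX.
rewrite -(pair_big (mem (between X1)) (mem (between X2)) (fun Y Z => d Y * d Z)) /=.
rewrite -big_distrlr /=.
exact: leq_mul (sum_between_defect hX) (sum_between_defect (halvesC hX)).
Qed.

Lemma between_ne0_excess_ge X1 X2 : halves X1 X2 ->
  between X1 != set0 -> between X2 != set0 ->
  (2 - 4 * s%:Z <= \sum_(Y in between X1) excess Y + \sum_(Y in between X2) excess Y
                    + \sum_(A in neither X1 X2) excess A)%R.
Proof.
move=> hX b1_n0 b2_n0.
have := sum_between_excess_gt0 hX b1_n0.
have := sum_between_excess_gt0 (halvesC hX) b2_n0.
suff : (- \sum_(A in neither X1 X2) excess A <= 4 * s%:Z)%R by lia.
apply: le_4s_of_mul_le; first lia.
apply: le_trans (_ : _ <= \sum_(A in neither X1 X2)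
  4 * (#|B :\: (A :|: X1)| * #|B :\: (A :|: X2)|)%:Z)%R _.
  rewrite -sumrN mulr_sumr; apply: ler_sum => A nA.
  have b1A := neither_union_between hX nA b1_n0.
  have b2A : A :|: X2 \in between X2.
    by apply: (neither_union_between (halvesC hX) _ b2_n0); rewrite neitherC.
  move: (nA); rewrite inE => /and3P[_ sAB _].
  rewrite (excess_below_halves hX sAB).
  exact: defect_pair_arith (between_defect_lt hX b1A) (between_defect_lt (halvesC hX) b2A).
rewrite -mulr_sumr -(big_morph _ PoszD (erefl (Posz 0))) ler_pM2l // lez_nat.
exact: sum_neither_defect_mul.
Qed.

Lemma halves_below_excess_ge X1 X2 :
  halves X1 X2 -> (- n%:Z <= \sum_(A in below) excess A)%R.
Proof.
move=> hX; rewrite (sum_below_halves hX) excess_B (excess_half hX) (excess_half (halvesC hX)).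
suff : (2 - 4 * s%:Z <= \sum_(Y in between X1) excess Y + \sum_(Y in between X2) excess Y
                         + \sum_(A in neither X1 X2) excess A)%R by lia.
have [b1_0 | b1_n0] := eqVneq (between X1) set0.
  rewrite b1_0 big_set0 add0r.
  have [b2_0 | b2_n0] := eqVneq (between X2) set0; last exact: one_between0_excess_ge.
  by rewrite b2_0 big_set0 add0r; apply: between0_excess_ge.
have [b2_0 | b2_n0] := eqVneq (between X2) set0; last exact: between_ne0_excess_ge.
rewrite b2_0 big_set0 addr0 neitherC.
exact: one_between0_excess_ge (halvesC hX) b2_0 b1_n0.
Qed.

End TwoChainBelow.

Lemma two_chain_below_excess_ge X Y S1 S2 : separating F ->
  X \in F -> Y \in F -> X \proper Y -> Y \proper B ->
  S1 \in small_part F -> S2 \in small_part F -> S1 :|: S2 = B ->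
  (- n%:Z <= \sum_(A in below) excess A)%R.
Proof.
move=> sepF FX FY pXY pYB; rewrite !inE => /andP[F1 small1] /andP[F2 small2] U.
have above0 : above = set0.
  apply/setP => M; rewrite inE in_set0; apply/negP => /and3P[FM pBM pMT].
  exact: (no_proper_chain5 height_F FX FY B_F FM setT_F pXY pYB pBM pMT).
have le_BC1 : #|~: B| <= 1.
  by have := card_setC_le_above sepF; rewrite above0 cards0; apply=> M; rewrite inE.
have cardBC : #|B| + #|~: B| = n by rewrite cardsC card_ord.
have lt_Bn : #|B| < n by have := proper_card B_proper; rewrite cardsT card_ord.
have := cardsUI S1 S2; rewrite U => cardU.
have [card_B n_eq card2] := halves_card_arith cardBC le_BC1 lt_Bn cardU small1 small2.
by apply: (halves_below_excess_ge card_B n_eq (X1 := S1) (X2 := S2)); split.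
Qed.

Lemma sum_excess_ge0 S1 S2 : separating F ->
  S1 \in small_part F -> S2 \in small_part F -> S1 :|: S2 = B ->
  (0 <= \sum_(A in F) excess A)%R.
Proof.
move=> sepF small1 small2 U; apply: le_trans sum_excess_ge_split.
case: (boolP [exists X in F, exists Y in F, (X \proper Y) && (Y \proper B)]).
  case/exists_inP => X FX /exists_inP[Y FY /andP[pXY pYB]].
  exact/excess_ge0_of_below/(two_chain_below_excess_ge sepF FX FY pXY pYB small1 small2 U).
move=> no_chain2.
have no_chain X Y : X \in F -> Y \in F -> X \proper Y -> ~~ (Y \proper B).
  move=> FX FY pXY; apply: contra no_chain2 => pYB.
  by apply/exists_inP; exists X => //; apply/exists_inP; exists Y; rewrite ?pXY.
have [inner0 | [A0 iA0]] := set_0Vmem inner.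
  exact/excess_ge0_of_below/inner0_below_excess_ge.
exact: no_chain_excess_ge0 iA0 no_chain sepF.
Qed.

End Core.

Theorem theorem2p1 (n : nat) (F : {set {set 'I_n}}) :
  union_closed F -> separating F -> bU F = [set: 'I_n] ->
  height F = 4 -> 4 <= n ->
  (exists S, is_B F S /\ #|S| <= 2) ->
  ((n%:R / 2%:R : rat) <= Avg F)%R.
Proof.
move=> [[X0 FX0 _] closedF] sepF bUF height_F n_ge4 [S [isB cardS]].
have F_n0 : F != set0 by apply/set0Pn; exists X0.
have setT_F : setT \in F by rewrite -bUF; apply: bigcup_mem_closed.
apply: Avg_ge_half F_n0 _.
case/andP: isB => /and3P[sS_small _ /eqP eqU] _.
have small_F : small_part F \subset F by apply/subsetP => A; rewrite inE => /andP[].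
have [small0 | small_n0] := eqVneq (small_part F) set0.
  apply: sumr_ge0 => A FA; have : A \notin small_part F by rewrite small0 inE.
  by rewrite inE FA -leqNgt /excess; lia.
have [S1 [S2 [small1 small2 eqB]]] := bigcup_eq_setU2 sS_small cardS small_n0 eqU.
have B_F : S1 :|: S2 \in F by rewrite -eqB; apply: bigcup_mem_closed.
have B_proper : S1 :|: S2 \proper setT.
  rewrite properEcard subsetT cardsT card_ord.
  apply: leq_ltn_trans (leq_card_setU S1 S2).1 _.
  by move: small1 small2; rewrite !inE -!mul2n => /andP[_ ?] /andP[_ ?]; lia.
have small_sub_B A : A \in small_part F -> A \subset S1 :|: S2.
  by rewrite -eqB; apply: bigcup_sup.
exact: (sum_excess_ge0 closedF setT_F (eq_leq height_F) n_ge4 B_F B_proper small_sub_B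
  sepF small1 small2 erefl).
Qed.
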